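(* (i) Every graph with $n$ vertices has at most $\sqrt{n+1}\cdot 2^{n/2}$ cliques or at most $\sqrt{n+1}\cdot 2^{n/2}$ cocliques. (ii) For every $n\ge 0$ there is a graph with $n$ vertices that has at least $\frac12\sqrt{n+1}\cdot 2^{n/2}$ cliques and at least $\frac12\sqrt{n+1}\cdot 2^{n/2}$ cocliques.
   Context: A graph is a finite simple undirected graph $(V,E)$. A clique is a set $X\subseteq V$ with every two distinct vertices adjacent; a coclique is a set $Y\subseteq V$ with no two distinct vertices adjacent (the empty set and singletons count as both). *)

From Stdlib Require Import Reals.
From mathcomp Require Import all_boot.
Set Implicit Arguments. Unset Strict Implicit. Unset Printing Implicit Defensive.

Definition simple_graph (T : finType) (e : rel T) : Prop :=
  symmetric e /\ irreflexive e.

Definition is_clique (T : finType) (e : rel T) (X : {set T}) : bool :=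
  [forall x in X, forall y in X, (x != y) ==> e x y].

Definition is_coclique (T : finType) (e : rel T) (Y : {set T}) : bool :=
  [forall x in Y, forall y in Y, (x != y) ==> ~~ e x y].

(* number of cliques / cocliques (empty set and singletons included) *)
Definition num_cliques (T : finType) (e : rel T) : nat :=
  #|[set X : {set T} | is_clique e X]|.
Definition num_cocliques (T : finType) (e : rel T) : nat :=
  #|[set Y : {set T} | is_coclique e Y]|.

Definition cbound (n : nat) : R :=
  Rmult (R_sqrt.sqrt (Rplus (INR n) 1)) (Rpower 2 (Rdiv (INR n) 2)).

(* (i) Call a pair (X, Y) with X a clique, Y a coclique and X :|: Y = U a
   cover of U.  Removing a vertex v of U from both parts maps covers of U to
   covers of U :\ v; this map is injective once we know which parts contained
   v, and a cover of U :\ v comes from two different covers of U only if v can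
   be added to both of its parts, which forces the cover (the neighbours of v
   go to the clique, its non-neighbours to the coclique).  Hence U has at most
   2 #|U| + 1 covers, and summing over all U gives
      #cliques * #cocliques <= sum_U (2 #|U| + 1) = (n + 1) 2^n,
   so the smaller of the two numbers is at most sqrt((n + 1) 2^n).
   (ii) In the split graph where a set K of k vertices is a clique adjacent to
   every vertex and the remaining n - k vertices are independent, there are at
   least 2^k (n - k + 1) cliques and 2^(n - k) cocliques.  Writing n = 2k + t
   with 2^t <= n + 1 < 2^(t + 2) makes both counts at least sqrt((n + 1) 2^n)/2.
   The file proves the cover count and the product bound, then the split-graph
   counts, the choice of k and t, and finally the estimates on cbound. *)

From Stdlib Require Import Reals Lra.
From mathcomp Require Import all_boot.
From mathcomp Require Import zify.

Set Implicit Arguments.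
Unset Strict Implicit.
Unset Printing Implicit Defensive.

Section CliquesAndCocliques.
Variables (T : finType) (e : rel T).

Lemma cliqueP (X : {set T}) :
  reflect {in X &, forall x y, x != y -> e x y} (is_clique e X).
Proof.
apply: (iffP forall_inP) => [H x y xX yX|H x xX]; last first.
  by apply/forall_inP => y yX; apply/implyP; apply: H.
by move/forall_inP/(_ y yX)/implyP: (H x xX).
Qed.

Lemma cocliqueP (Y : {set T}) :
  reflect {in Y &, forall x y, x != y -> ~~ e x y} (is_coclique e Y).
Proof.
apply: (iffP forall_inP) => [H x y xY yY|H x xY]; last first.
  by apply/forall_inP => y yY; apply/implyP; apply: H.
by move/forall_inP/(_ y yY)/implyP: (H x xY).
Qed.

Lemma clique_subset (X X' : {set T}) :
  X' \subset X -> is_clique e X -> is_clique e X'.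
Proof.
move=> /subsetP sX /cliqueP cX; apply/cliqueP => x y xX yX.
exact: cX (sX x xX) (sX y yX).
Qed.

Lemma coclique_subset (Y Y' : {set T}) :
  Y' \subset Y -> is_coclique e Y -> is_coclique e Y'.
Proof.
move=> /subsetP sY /cocliqueP cY; apply/cocliqueP => x y xY yY.
exact: cY (sY x xY) (sY y yY).
Qed.

Definition covers (U : {set T}) : {set {set T} * {set T}} :=
  [set p | [&& is_clique e p.1, is_coclique e p.2 & p.1 :|: p.2 == U]].

Lemma coversP U p :
  reflect [/\ is_clique e p.1, is_coclique e p.2 & p.1 :|: p.2 = U]
          (p \in covers U).
Proof. by rewrite inE; apply: (iffP and3P) => -[? ? /eqP]. Qed.

Lemma covers_set0 : #|covers set0| <= 1.
Proof.
rewrite -(cards1 (@set0 T, @set0 T)); apply/subset_leq_card/subsetP.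
move=> [X Y] /coversP[_ _ /= /eqP].
by rewrite setU_eq0 => /andP[/eqP-> /eqP->]; rewrite inE.
Qed.

Section RemoveVertex.
Variable v : T.

Definition nbhd : {set T} := [set u | e v u].

Definition split_at (W : {set T}) : {set T} * {set T} := (W :&: nbhd, W :\: nbhd).

Lemma forced_split (X Y : {set T}) :
  v \notin X -> v \notin Y -> is_clique e (v |: X) -> is_coclique e (v |: Y) ->
  (X, Y) = split_at (X :|: Y).
Proof.
move=> vX vY /cliqueP cX /cocliqueP cY.
have adj x : x \in X -> e v x.
  move=> xX; apply: cX; rewrite ?setU11 ?setU1r //.
  by apply: contraNneq vX => ->.
have nadj x : x \in Y -> ~~ e v x.
  move=> xY; apply: cY; rewrite ?setU11 ?setU1r //.
  by apply: contraNneq vY => ->.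
congr pair; apply/setP => x; rewrite !inE.
all: by case: (boolP (x \in X)) => [/adj|_]; case: (boolP (x \in Y)) => [/nadj|_];
   case: (e v x).
Qed.

Definition drop_vertex (p : {set T} * {set T}) : {set T} * {set T} :=
  (p.1 :\ v, p.2 :\ v).

Lemma drop_vertex_covers (U : {set T}) p :
  p \in covers U -> drop_vertex p \in covers (U :\ v).
Proof.
case/coversP=> cX cY HU; apply/coversP; split => /=.
- exact: clique_subset (subsetDl _ _) cX.
- exact: coclique_subset (subsetDl _ _) cY.
- by rewrite -setDUl HU.
Qed.

Lemma setD1_inj (A A' : {set T}) :
  A :\ v = A' :\ v -> (v \in A) = (v \in A') -> A = A'.
Proof.
move=> E vA; apply/setP => x; case: (eqVneq x v) => [->//|xv].
by move/setP/(_ x): E; rewrite !inE xv.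
Qed.

Definition covers_with (U : {set T}) (b1 b2 : bool) : {set {set T} * {set T}} :=
  covers U :&: [set p : {set T} * {set T} | ((v \in p.1) == b1) && ((v \in p.2) == b2)].

Lemma drop_vertex_inj (U : {set T}) b1 b2 :
  {in covers_with U b1 b2 &, injective drop_vertex}.
Proof.
move=> [X Y] [X' Y']; rewrite !in_setI !in_set /=.
move=> /andP[_ /andP[/eqP vX /eqP vY]] /andP[_ /andP[/eqP vX' /eqP vY']] [EX EY].
by congr pair; apply: setD1_inj; rewrite ?vX ?vY ?vX' ?vY'.
Qed.

Definition extendable (W : {set T}) : {set {set T} * {set T}} :=
  [set q in covers W | is_clique e (v |: q.1) && is_coclique e (v |: q.2)].

Lemma extendable_le1 (W : {set T}) : v \notin W -> #|extendable W| <= 1.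
Proof.
move=> vW; rewrite -(cards1 (split_at W)); apply/subset_leq_card/subsetP.
move=> [X Y]; rewrite in_set => /andP[/coversP[_ _ /= HU] /andP[cX cY]].
have [vX vY] : v \notin X /\ v \notin Y.
  by split; apply: contra vW; rewrite -HU inE => ->; rewrite ?orbT.
by rewrite (forced_split vX vY cX cY) HU set11.
Qed.

Lemma drop_vertex_extendable (U : {set T}) p (b1 b2 : bool) :
  p \in covers_with U b1 b2 ->
  [/\ drop_vertex p \in covers (U :\ v),
      b1 -> is_clique e (v |: (drop_vertex p).1) &
      b2 -> is_coclique e (v |: (drop_vertex p).2)].
Proof.
rewrite in_setI => /andP[pU]; rewrite in_set => /andP[/eqP vX /eqP vY].
split; first exact: drop_vertex_covers.
- by move=> b1T; rewrite setD1K ?vX //; case/coversP: pU.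
- by move=> b2T; rewrite setD1K ?vY //; case/coversP: pU.
Qed.

(* A cover of U arises from a cover of U :\ v by putting v into the clique,
   into the coclique, or into both; only the extendable cover of U :\ v arises
   in more than one way, and it arises at most three times. *)
Lemma covers_step (U : {set T}) : v \in U -> #|covers U| <= #|covers (U :\ v)| + 2.
Proof.
move=> vU.
set P10 := covers_with U true false; set P01 := covers_with U false true.
set P11 := covers_with U true true; set B := extendable (U :\ v).
have cover : covers U \subset P10 :|: P01 :|: P11.
  apply/subsetP => -[X Y] pU; have [_ _ /= HU] := coversP _ _ pU.
  have : v \in X :|: Y by rewrite HU.
  by rewrite !in_setU !in_setI pU !in_set /=; case: (v \in X); case: (v \in Y).
have hB : #|B| <= 1 by apply: extendable_le1; rewrite setD11.
have h11 : #|drop_vertex @: P11| <= #|B|.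
  apply/subset_leq_card/subsetP => _ /imsetP[p pP ->].
  by have [q cX cY] := drop_vertex_extendable pP; rewrite inE q cX ?cY.
have hU : drop_vertex @: P10 :|: drop_vertex @: P01 \subset covers (U :\ v).
  rewrite subUset; apply/andP; split;
    by apply/subsetP => _ /imsetP[p /drop_vertex_extendable[? _ _] ->].
have hI : #|drop_vertex @: P10 :&: drop_vertex @: P01| <= #|B|.
  apply/subset_leq_card/subsetP => q; rewrite inE.
  case/andP=> /imsetP[p pP ->] /imsetP[p' pP' Ep].
  have [q1 cX _] := drop_vertex_extendable pP.
  have [_ _ cY] := drop_vertex_extendable pP'.
  by rewrite inE q1 cX // Ep cY.
have cardUI := cardsUI (drop_vertex @: P10) (drop_vertex @: P01).
rewrite (card_in_imset (@drop_vertex_inj U true false)) in cardUI.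
rewrite (card_in_imset (@drop_vertex_inj U false true)) in cardUI.
rewrite (card_in_imset (@drop_vertex_inj U true true)) in h11.
apply: leq_trans (subset_leq_card cover) _.
apply: leq_trans (leq_card_setU _ _).1 _.
rewrite -[2]/(1 + 1) addnA; apply: leq_add; last exact: leq_trans h11 hB.
apply: leq_trans (leq_card_setU _ _).1 _.
by rewrite -cardUI leq_add // ?subset_leq_card // (leq_trans hI hB).
Qed.
End RemoveVertex.

Lemma card_covers (U : {set T}) : #|covers U| <= 2 * #|U| + 1.
Proof.
have [n] := ubnP #|U|; elim: n U => // n IH U ltUn.
have [->|[v vU]] := set_0Vmem U; first by rewrite cards0 covers_set0.
have cardU : #|U| = #|U :\ v|.+1 by rewrite (cardsD1 v U) vU.
apply: leq_trans (covers_step vU) _.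
have := IH (U :\ v); rewrite -ltnS -cardU => /(_ ltUn); lia.
Qed.

(* There are 2^#|T| subsets and, pairing each with its complement, their
   sizes add up to half of #|T| 2^#|T|. *)
Lemma card_subsets : #|{: {set T}}| = 2 ^ #|T|.
Proof. by have := card_powerset [set: T]; rewrite powersetT !cardsT. Qed.

Lemma sum_card_subsets : (\sum_(U : {set T}) #|U|).*2 = #|T| * 2 ^ #|T|.
Proof.
rewrite -addnn {2}(reindex_inj (@setC_inj T)) -big_split /=.
under eq_bigr do rewrite cardsC.
by rewrite sum_nat_const card_subsets mulnC.
Qed.

(* The product bound: group clique/coclique pairs by their union. *)
Lemma clique_coclique_product :
  #|[set X | is_clique e X]| * #|[set Y | is_coclique e Y]| <= #|T|.+1 * 2 ^ #|T|.
Proof.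
rewrite -cardsX -sum1_card (partition_big (fun p => p.1 :|: p.2) predT) //=.
apply: (@leq_trans (\sum_(U : {set T}) (2 * #|U| + 1))).
  apply: leq_sum => U _; rewrite sum1_card; apply: leq_trans (card_covers U).
  apply/subset_leq_card/subsetP => -[X Y].
  by rewrite unfold_in /= !inE; case/andP=> /andP[-> ->].
rewrite big_split /= sum_nat_const card_subsets -big_distrr /= mul2n.
by rewrite sum_card_subsets muln1 mulSn addnC.
Qed.
End CliquesAndCocliques.

Section SplitGraph.
Variables (T : finType) (K : {set T}).

Definition split_graph : rel T := fun x y => (x != y) && ((x \in K) || (y \in K)).

Lemma split_graph_simple : simple_graph split_graph.
Proof.
split; first by move=> x y; rewrite /split_graph eq_sym orbC.
by move=> x; rewrite /split_graph eqxx.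
Qed.

(* Every subset of the complement of K is a coclique. *)
Lemma split_graph_cocliques : 2 ^ #|~: K| <= num_cocliques split_graph.
Proof.
rewrite -card_powerset; apply/subset_leq_card/subsetP => Y.
rewrite !inE => /subsetP sY; apply/cocliqueP => x y xY yY _.
move: (sY x xY) (sY y yY); rewrite /split_graph !inE => /negbTE-> /negbTE->.
by rewrite andbF.
Qed.

Lemma card_small_subsets (C : {set T}) :
  #|[set B : {set T} | B \subset C & #|B| <= 1]| = #|C| + 1.
Proof.
have -> : [set B : {set T} | B \subset C & #|B| <= 1] =
    [set B : {set T} | B \subset C & #|B| == 0] :|:
    [set B : {set T} | B \subset C & #|B| == 1].
  by apply/setP => B; rewrite !inE -andb_orr leq_eqVlt ltnS leqn0 orbC.
rewrite cardsU !cards_draws bin0 bin1 addnC.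
suff -> : [set B : {set T} | B \subset C & #|B| == 0] :&:
          [set B : {set T} | B \subset C & #|B| == 1] = set0 by rewrite cards0 subn0.
by apply/setP => B; rewrite !inE; case: eqP => [->|_]; rewrite ?andbF.
Qed.

(* A subset of K together with at most one vertex outside K is a clique, and
   the two pieces are recovered from their union. *)
Lemma split_graph_cliques : 2 ^ #|K| * (#|~: K| + 1) <= num_cliques split_graph.
Proof.
set S := [set B : {set T} | B \subset ~: K & #|B| <= 1].
pose join (p : {set T} * {set T}) := p.1 :|: p.2.
have recover (X Y : {set T}) : X \subset K -> Y \subset ~: K ->
    (X, Y) = ((X :|: Y) :&: K, (X :|: Y) :\: K).
  move=> /subsetP sX /subsetP sY; congr pair; apply/setP => x; rewrite !inE;
    move: (sX x) (sY x) => /implyP + /implyP; rewrite inE;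
    by case: (x \in X); case: (x \in Y); case: (x \in K).
have join_inj : {in setX (powerset K) S &, injective join}.
  move=> [A B] [A' B']; rewrite !inE /= => /andP[sAK /andP[sBK _]].
  move=> /andP[sA'K /andP[sB'K _]] E.
  by rewrite (recover A B) // (recover A' B') // -/(join (A, B)) E.
rewrite -card_powerset -card_small_subsets -cardsX -(card_in_imset join_inj).
apply/subset_leq_card/subsetP => _ /imsetP[[A B] + ->].
rewrite !inE /= => /andP[/subsetP sAK /andP[_ /card_le1_eqP B1]].
apply/cliqueP => x y; rewrite /join !inE => xAB yAB xy; rewrite /split_graph xy /=.
case/orP: xAB => [/sAK-> //|xB]; case/orP: yAB => [/sAK->|yB]; first by rewrite orbT.
by move: xy; rewrite (B1 x y xB yB) eqxx.
Qed.
End SplitGraph.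

Lemma card_ord_prefix n k : k <= n -> #|[set i : 'I_n | i < k]| = k.
Proof.
move=> le_kn; rewrite -sum1_card (eq_bigl (fun i : 'I_n => i < k)) => [|i]; last first.
  by rewrite inE.
by rewrite (big_ord_narrow le_kn) sum1_card card_ord.
Qed.

Lemma product_le_square (a b m : nat) : a * b <= m -> a * a <= m \/ b * b <= m.
Proof.
move=> abm; case: (leqP a b) => [ab|/ltnW ba]; [left|right]; apply: leq_trans abm.
- exact: leq_mul.
- by rewrite mulnC leq_mul.
Qed.

(* Every n can be written n = 2k + t with 2^t <= n + 1 < 2^(t + 2): take t the
   binary logarithm of n + 1, lowered by one if needed to match the parity of n. *)
Lemma balanced_exponent n :
  exists k t, n = k + (k + t) /\ 2 ^ t <= n.+1 < 4 * 2 ^ t.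
Proof.
have [t0 /andP[lo hi]] : exists t0, 2 ^ t0 <= n.+1 < 2 * 2 ^ t0.
  exists (trunc_log 2 n.+1); rewrite trunc_logP //= -expnS.
  exact: trunc_log_ltn.
have [t [lot hit par]] :
    exists t, [/\ 2 ^ t <= n.+1, n.+1 < 4 * 2 ^ t & ~~ odd (n + t)].
  have [odd_nt|even_nt] := boolP (odd (n + t0)); last by exists t0; split => //; lia.
  case: t0 lo hi odd_nt => [|t] lo hi odd_nt.
    have n0 : n = 0 by rewrite expn0 in hi; lia.
    by rewrite n0 in odd_nt.
  exists t; rewrite expnS in lo hi; split; [lia | lia | by move: odd_nt; rewrite addnS].
have tn : t <= n by have := ltn_expl t (isT : 1 < 2); lia.
exists (n - t)./2, t; split; last by rewrite lot hit.
have := odd_double_half (n - t); rewrite oddB // -oddD (negbTE par) add0n -addnn; lia.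
Qed.

(* For such k and t, both 2^k (k + t + 1) and 2^(k + t) are at least half of
   sqrt((n + 1) 2^n) (stated with squares and the factor 1/2 cleared). *)
Lemma balanced_bounds k t : let n := k + (k + t) in 2 ^ t <= n.+1 < 4 * 2 ^ t ->
  n.+1 * 2 ^ n <= 4 * (2 ^ k * (k + t).+1) ^ 2 /\ n.+1 * 2 ^ n <= 4 * (2 ^ (k + t)) ^ 2.
Proof.
move=> n /andP[lo hi]; rewrite /n !expnD; set a := 2 ^ k; set b := 2 ^ t.
have a0 : 0 < a by rewrite expn_gt0.
have lo' : n.+1 * b <= 4 * (k + t).+1 ^ 2 by rewrite /n in lo *; nia.
rewrite /n in lo hi lo'; split; nia.
Qed.

Section CboundEstimates.
Local Open Scope R_scope.

Lemma INR_expn2 m : INR (2 ^ m)%N = 2 ^ m.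
Proof. by elim: m => [|m IH] //; rewrite expnS mulnE mult_INR IH /=. Qed.

Lemma cbound_sq n : cbound n * cbound n = INR (n.+1 * 2 ^ n)%N.
Proof.
have sqrt_sq : sqrt (INR n + 1) * sqrt (INR n + 1) = INR n + 1.
  by apply: sqrt_sqrt; have := pos_INR n; lra.
have pow_sq : Rpower 2 (INR n / 2) * Rpower 2 (INR n / 2) = 2 ^ n.
  by rewrite -Rpower_plus -Rpower_pow; [congr Rpower; field | lra].
rewrite mulnE mult_INR INR_expn2 S_INR -sqrt_sq -pow_sq /cbound; ring.
Qed.

Lemma cbound_ge0 n : 0 <= cbound n.
Proof. by apply: Rmult_le_pos; [apply: sqrt_pos | apply/Rlt_le/exp_pos]. Qed.

Lemma le_cbound n c : (c * c <= n.+1 * 2 ^ n)%N -> INR c <= cbound n.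
Proof.
move/leP/le_INR => H; apply: Rsqr_incr_0_var (cbound_ge0 n).
by rewrite /Rsqr cbound_sq -mult_INR.
Qed.

Lemma half_cbound_le n c : (n.+1 * 2 ^ n <= 4 * c ^ 2)%N -> / 2 * cbound n <= INR c.
Proof.
move/leP/le_INR => H; apply: Rsqr_incr_0_var (pos_INR c).
rewrite -[(c ^ 2)%N]/(c * c)%N -cbound_sq !mult_INR in H.
have -> : (/ 2 * cbound n)² = / 4 * (cbound n * cbound n) by rewrite /Rsqr; field.
rewrite /Rsqr; simpl INR in H; lra.
Qed.

End CboundEstimates.

Theorem theorem2 :
  (forall (n : nat) (e : rel 'I_n), simple_graph e ->
     Rle (INR (num_cliques e)) (cbound n) \/ Rle (INR (num_cocliques e)) (cbound n))
  /\
  (forall n : nat, exists e : rel 'I_n, simple_graph e /\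
     Rle (Rmult (/2) (cbound n)) (INR (num_cliques e)) /\
     Rle (Rmult (/2) (cbound n)) (INR (num_cocliques e))).
Proof.
split.
- move=> n e _; have := clique_coclique_product e; rewrite card_ord.
  by case/product_le_square => [cl|co]; [left|right]; apply: le_cbound.
- move=> n; have [k [t [-> bounds]]] := balanced_exponent n.
  have [clq coc] := balanced_bounds bounds.
  set K := [set i : 'I_(k + (k + t)) | i < k].
  have cardK : #|K| = k by rewrite card_ord_prefix ?leq_addr.
  have cardKc : #|~: K| = k + t by have := cardsC K; rewrite cardK card_ord; lia.
  exists (split_graph K); split; first exact: split_graph_simple.
  split; apply: half_cbound_le.
  + apply: leq_trans clq _; rewrite leq_mul2l /= leq_sqr.
    by have := split_graph_cliques K; rewrite cardK cardKc addn1.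
  + apply: leq_trans coc _; rewrite leq_mul2l /= leq_sqr.
    by have := split_graph_cocliques K; rewrite cardKc.
Qed.
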